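(* Let $m,n\ge2$, let $\mathcal D$ be an $m\times n$ domino diagram, and consider the associated set of generalized domino states in $\mathbb C^m\otimes\mathbb C^n$ (with any choice of the nonzero constants $\alpha_r,\beta_c$). Suppose the graphs of these product states satisfy $G_A=\overline{G_B}$. If $\mathcal D$ contains a vertical domino of length at least $2$, then the states are not perfectly distinguishable by one-way LOCC with Alice measuring first; and if $\mathcal D$ contains a horizontal domino of length at least $2$, then they are not perfectly distinguishable by one-way LOCC with Bob measuring first.
   Context: An $m\times n$ chessboard has squares indexed by $\mathbb Z_m\times\mathbb Z_n$ and is regarded as a torus. A horizontal domino is a set of squares $(r,b+1),\dots,(r,b+s)$ (column indices mod $n$), a vertical domino is a set $(b+1,c),\dots,(b+s,c)$ (row indices mod $m$); $s$ is its length. An $m\times n$ domino diagram is a partition of the squares into dominoes. With $\{|0\rangle,\dots,|m-1\rangle\}$ and $\{|0\rangle,\dots,|n-1\rangle\}$ the standard bases of $\mathbb C^m$ (Alice) and $\mathbb C^n$ (Bob), fix a nonzero complex number $\alpha_r$ for each row $r$ and $\beta_c$ for each column $c$. The generalized domino states are obtained by assigning to each square a state: if square $(r,b+j)$, $1\le j\le s$, lies in a horizontal domino occupying $(r,b+1),\dots,(r,b+s)$, it is assigned $\sum_{k=1}^s\alpha_r^k\omega^{jk}|r\rangle\otimes|b+k\rangle$ with $\omega=e^{2\pi i/s}$; if square $(b+j,c)$ lies in a vertical domino occupying $(b+1,c),\dots,(b+s,c)$, it is assigned $\sum_{k=1}^s\beta_c^k\omega^{jk}|b+k\rangle\otimes|c\rangle$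 with $\omega=e^{2\pi i/s}$. For product states $|\psi_v^A\rangle\otimes|\psi_v^B\rangle$, $G_A$ is the graph on the index set with an edge $\{u,v\}$ ($u\ne v$) iff $\langle\psi_u^A|\psi_v^A\rangle\ne0$, $G_B$ likewise with Bob's vectors, and $\overline{G}$ is the complement. One-way LOCC with Alice first: there exist positive semidefinite $Q_1,\dots,Q_N$ on Alice's space with $\sum_jQ_j=I$ and, for each $j$, positive semidefinite $R^{(j)}_1,\dots$ on Bob's space summing to $I$ (one for each state) such that $\langle\psi_l|Q_j\otimes R^{(j)}_k|\psi_l\rangle=0$ for all $j$ and $k\ne l$; with Bob first, the same with the roles of the two factors exchanged. *)

From HB Require Import structures.
From mathcomp Require Import all_boot all_order all_algebra.
Set Implicit Arguments. Unset Strict Implicit. Unset Printing Implicit Defensive.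
Import Order.TTheory GRing.Theory Num.Theory.

Section Domino.
Variable C : numClosedFieldType.
Local Open Scope ring_scope.

Definition adj {p q : nat} (A : 'M[C]_(p, q)) : 'M[C]_(q, p) :=
  (map_mx Num.conj A)^T.

Definition ip {p : nat} (u v : 'cV[C]_p) : C := (adj u *m v) 0 0.

Definition psd {p : nat} (A : 'M[C]_p) : Prop :=
  adj A = A /\ forall v : 'cV[C]_p, 0 <= (adj v *m A *m v) 0 0.

(* Kronecker (tensor) product, with C^p (x) C^q identified with C^(p*q)
   through mxvec_index (i, j) |-> index of |i> (x) |j>. *)
Definition kron {p1 q1 p2 q2 : nat} (A : 'M[C]_(p1, q1)) (B : 'M[C]_(p2, q2))
  : 'M[C]_(p1 * p2, q1 * q2) :=
  \matrix_(i, j) \sum_(i1 < p1) \sum_(i2 < p2) \sum_(j1 < q1) \sum_(j2 < q2)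
     (((i == mxvec_index i1 i2) && (j == mxvec_index j1 j2))%:R
        * A i1 j1 * B i2 j2).

Definition expect {p : nat} (psi : 'cV[C]_p) (X : 'M[C]_p) : C :=
  (adj psi *m X *m psi) 0 0.

(* omega_s = e^{2 pi i / s}: s.-root (-1) is e^{i pi / s} (minimal argument) *)
Definition omega (s : nat) : C := (s.-root (-1)) ^+ 2.

Definition ket {p : nat} (i : 'I_p) : 'cV[C]_p := \col_(k < p) (k == i)%:R.

End Domino.

(* Dom true r b s : horizontal domino (r,b+1),...,(r,b+s) (columns mod n);
   Dom false c b s : vertical domino (b+1,c),...,(b+s,c) (rows mod m). *)
Inductive domino := Dom of bool & nat & nat & nat.

Definition dhoriz (d : domino) := let: Dom h _ _ _ := d in h.
Definition dline (d : domino) := let: Dom _ l _ _ := d in l.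
Definition dstart (d : domino) := let: Dom _ _ b _ := d in b.
Definition dlen (d : domino) := let: Dom _ _ _ s := d in s.

Definition valid_domino (m n : nat) (d : domino) : bool :=
  if dhoriz d then [&& dline d < m, dstart d < n, 0 < dlen d & dlen d <= n]%N
  else [&& dline d < n, dstart d < m, 0 < dlen d & dlen d <= m]%N.

Definition dom_mem (m n : nat) (d : domino) (x : 'I_m * 'I_n) : bool :=
  if dhoriz d then
    (x.1 == dline d :> nat) &&
    has (fun k => (dstart d + k.+1) %% n == x.2) (iota 0 (dlen d))
  else
    (x.2 == dline d :> nat) &&
    has (fun k => (dstart d + k.+1) %% m == x.1) (iota 0 (dlen d)).

Definition domino_diagram (m n : nat) (D : seq domino) : Prop :=
  all (valid_domino m n) D /\
  forall x : 'I_m * 'I_n, (count (fun d => dom_mem d x) D = 1)%N.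

Definition domino_of (m n : nat) (D : seq domino) (x : 'I_m * 'I_n) : domino :=
  nth (Dom true 0 0 0) D (find (fun d => dom_mem d x) D).

(* the position j (1 <= j <= s) of square x inside its domino *)
Definition pos_in (m n : nat) (d : domino) (x : 'I_m * 'I_n) : nat :=
  if dhoriz d then
    (find (fun k => (dstart d + k.+1) %% n == x.2) (iota 0 (dlen d))).+1
  else
    (find (fun k => (dstart d + k.+1) %% m == x.1) (iota 0 (dlen d))).+1.

Section States.
Variable C : numClosedFieldType.
Local Open Scope ring_scope.

Definition stateA (m n : nat) (alpha : 'I_m -> C) (beta : 'I_n -> C)
  (D : seq domino) (x : 'I_m * 'I_n) : 'cV[C]_m :=
  let d := domino_of D x in
  let j := pos_in d x in
  let s := dlen d in
  if dhoriz d then ket C x.1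
  else \col_(r < m)
        \sum_(k < s | ((dstart d + k.+1) %% m)%N == r)
           beta x.2 ^+ k.+1 * omega C s ^+ (j * k.+1).

Definition stateB (m n : nat) (alpha : 'I_m -> C) (beta : 'I_n -> C)
  (D : seq domino) (x : 'I_m * 'I_n) : 'cV[C]_n :=
  let d := domino_of D x in
  let j := pos_in d x in
  let s := dlen d in
  if dhoriz d then
    \col_(c < n)
        \sum_(k < s | ((dstart d + k.+1) %% n)%N == c)
           alpha x.1 ^+ k.+1 * omega C s ^+ (j * k.+1)
  else ket C x.2.

Definition state (m n : nat) (alpha : 'I_m -> C) (beta : 'I_n -> C)
  (D : seq domino) (x : 'I_m * 'I_n) : 'cV[C]_(m * n) :=
  kron (stateA alpha beta D x) (stateB alpha beta D x).

Definition GA_eq_compl_GB {I : finType} {p q : nat}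
  (a : I -> 'cV[C]_p) (b : I -> 'cV[C]_q) : Prop :=
  forall u v : I, u != v -> (ip (a u) (a v) != 0) = (ip (b u) (b v) == 0).

Definition oneway_LOCC_A {I : finType} {p q : nat}
  (psi : I -> 'cV[C]_(p * q)) : Prop :=
  exists (N : nat) (Q : 'I_N -> 'M[C]_p) (R : 'I_N -> I -> 'M[C]_q),
    (forall j, psd (Q j)) /\ \sum_(j < N) Q j = 1%:M /\
    (forall j k, psd (R j k)) /\ (forall j, \sum_(k : I) R j k = 1%:M) /\
    forall j (k l : I), k != l -> expect (psi l) (kron (Q j) (R j k)) = 0.

Definition oneway_LOCC_B {I : finType} {p q : nat}
  (psi : I -> 'cV[C]_(p * q)) : Prop :=
  exists (N : nat) (Q : 'I_N -> 'M[C]_q) (R : 'I_N -> I -> 'M[C]_p),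
    (forall j, psd (Q j)) /\ \sum_(j < N) Q j = 1%:M /\
    (forall j k, psd (R j k)) /\ (forall j, \sum_(k : I) R j k = 1%:M) /\
    forall j (k l : I), k != l -> expect (psi l) (kron (R j k) (Q j)) = 0.

End States.

(* Let (r1,c),(r2,c) be two cells of a long vertical domino and c' another
   column.  Alice's vectors along any column form an orthogonal basis of C^m,
   and Bob's vectors at (r1,c) and (r2,c) are both |c>, so G_A = complement of
   G_B makes Alice's vectors there orthogonal.  Let Q be an outcome of Alice's
   measurement not annihilating her vector at (r1,c).  Bob must then tell
   apart all states surviving Q, so their Bob vectors are pairwise
   orthogonal.  Every Bob vector of column c overlaps |c>, hence Q kills
   Alice's other vectors of column c, and therefore every state whose Alice
   vector overlaps the one at (r1,c) survives.  Expand Alice's vector at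
   (r1,c) in the basis of column c': if it overlaps two basis vectors, the
   two corresponding states survive and are orthogonal on both sides; if only
   one, say at (r,c'), it is parallel to it, and the pairs
   ((r,c'),(r1,c)) and ((r,c'),(r2,c)) give contradictory instances of
   G_A = complement of G_B.  The horizontal case exchanges Alice and Bob. *)

From HB Require Import structures.
From mathcomp Require Import all_boot all_order all_algebra.
From mathcomp Require Import ring.
Set Implicit Arguments. Unset Strict Implicit. Unset Printing Implicit Defensive.
Import Order.TTheory GRing.Theory Num.Theory.
Local Open Scope ring_scope.

Section InnerProduct.
Variable C : numClosedFieldType.

Lemma adjE p q (A : 'M[C]_(p, q)) i j : adj A i j = (A j i)^*.
Proof. by rewrite /adj !mxE. Qed.

Lemma adjK p q (A : 'M[C]_(p, q)) : adj (adj A) = A.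
Proof. by apply/matrixP => i j; rewrite !adjE conjCK. Qed.

Lemma adj_mul p q r (A : 'M[C]_(p, q)) (B : 'M[C]_(q, r)) :
  adj (A *m B) = adj B *m adj A.
Proof.
apply/matrixP => i j; rewrite adjE !mxE rmorph_sum; apply: eq_bigr => k _.
by rewrite !adjE rmorphM mulrC.
Qed.

Lemma ipE p (u v : 'cV[C]_p) : ip u v = \sum_i (u i 0)^* * v i 0.
Proof. by rewrite /ip !mxE; apply: eq_bigr => i _; rewrite adjE. Qed.

Lemma ipC p (u v : 'cV[C]_p) : ip v u = (ip u v)^*.
Proof.
rewrite !ipE rmorph_sum; apply: eq_bigr => i _.
by rewrite rmorphM /= conjCK mulrC.
Qed.

Lemma ip_eq0C p (u v : 'cV[C]_p) : (ip v u == 0) = (ip u v == 0).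
Proof. by rewrite ipC conjC_eq0. Qed.

Lemma ip0r p (u : 'cV[C]_p) : ip u 0 = 0.
Proof. by rewrite ipE big1 // => i _; rewrite mxE mulr0. Qed.

Lemma ipDr p (u v w : 'cV[C]_p) : ip u (v + w) = ip u v + ip u w.
Proof. by rewrite !ipE -big_split; apply: eq_bigr => i _; rewrite mxE mulrDr. Qed.

Lemma ipZr p a (u v : 'cV[C]_p) : ip u (a *: v) = a * ip u v.
Proof. by rewrite !ipE mulr_sumr; apply: eq_bigr => i _; rewrite mxE mulrCA. Qed.

Lemma ipDl p (u v w : 'cV[C]_p) : ip (v + w) u = ip v u + ip w u.
Proof. by rewrite ipC ipDr rmorphD /= -!ipC. Qed.

Lemma ipZl p a (u v : 'cV[C]_p) : ip (a *: v) u = a^* * ip v u.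
Proof. by rewrite ipC ipZr rmorphM /= -ipC. Qed.

Lemma ip_sumr p (I : finType) (u : 'cV[C]_p) (F : I -> 'cV[C]_p) :
  ip u (\sum_i F i) = \sum_i ip u (F i).
Proof.
rewrite ipE; under eq_bigr do rewrite summxE mulr_sumr.
by rewrite exchange_big; apply: eq_bigr => i _; rewrite ipE.
Qed.

Lemma ip_ge0 p (v : 'cV[C]_p) : 0 <= ip v v.
Proof. by rewrite ipE sumr_ge0 // => i _; rewrite mulrC mul_conjC_ge0. Qed.

Lemma ip_eq0 p (v : 'cV[C]_p) : (ip v v == 0) = (v == 0).
Proof.
apply/idP/eqP => [|->]; last by rewrite ip0r.
rewrite ipE psumr_eq0 => [/allP v0|i _]; last by rewrite mulrC mul_conjC_ge0.
apply/matrixP => i j; rewrite (ord1 j) mxE.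
by have := v0 i (mem_index_enum i); rewrite mulrC mul_conjC_eq0 => /eqP.
Qed.

Lemma ip_mulmxr p q (A : 'M[C]_(p, q)) u v : ip u (A *m v) = ip (adj A *m u) v.
Proof. by rewrite /ip adj_mul adjK mulmxA. Qed.

Lemma expectE p (v : 'cV[C]_p) A : expect v A = ip v (A *m v).
Proof. by rewrite /expect /ip mulmxA. Qed.

Lemma expect_sum p (v : 'cV[C]_p) (J : finType) (A : J -> 'M[C]_p) :
  expect v (\sum_j A j) = \sum_j expect v (A j).
Proof.
by rewrite expectE mulmx_suml ip_sumr; apply: eq_bigr => j _; rewrite expectE.
Qed.

Lemma expect1 p (v : 'cV[C]_p) : expect v 1%:M = ip v v.
Proof. by rewrite expectE mul1mx. Qed.

(* The columns of [F] are the basis vectors and [G] is a left inverse of [F],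
   hence also a right inverse. *)
Lemma orthogonal_basis_expansion p (h : 'I_p -> 'cV[C]_p) :
  (forall i, h i != 0) -> (forall i j, i != j -> ip (h i) (h j) = 0) ->
  forall u, u = \sum_i (ip (h i) u / ip (h i) (h i)) *: h i.
Proof.
move=> h_neq0 h_orth u.
pose F : 'M[C]_p := \matrix_(k, i) h i k 0.
pose G : 'M[C]_p := \matrix_(i, k) ((ip (h i) (h i))^-1 * (h i k 0)^*).
have GF : G *m F = 1%:M.
  apply/matrixP => i j; rewrite !mxE.
  have -> : \sum_k G i k * F k j = (ip (h i) (h i))^-1 * ip (h i) (h j).
    by rewrite [ip _ (h j)]ipE mulr_sumr; apply: eq_bigr => k _; rewrite !mxE mulrA.
  case: (eqVneq i j) => [<-|ij]; first by rewrite mulVf // ip_eq0.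
  by rewrite (h_orth i j ij) mulr0.
rewrite {1}(_ : u = F *m (G *m u)); last by rewrite mulmxA (mulmx1C GF) mul1mx.
apply/matrixP => k z; rewrite (ord1 z) [LHS]mxE summxE; apply: eq_bigr => i _.
rewrite [in RHS]mxE [F k i]mxE mulrC; congr (_ * _).
rewrite [LHS]mxE [ip (h i) u]ipE mulr_suml; apply: eq_bigr => l _.
by rewrite mxE; ring.
Qed.

End InnerProduct.

Section PositiveSemidefinite.
Variables (C : numClosedFieldType) (p : nat) (A : 'M[C]_p).
Hypothesis A_psd : psd A.

Lemma psd_ip_ge0 v : 0 <= ip v (A *m v).
Proof. by case: A_psd => _ /(_ v); rewrite -expectE. Qed.

Lemma psd_ip_sym u v : ip u (A *m v) = ip (A *m u) v.
Proof. by case: A_psd => A_sym _; rewrite ip_mulmxr A_sym. Qed.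

(* Expanding [<v - s w| A |v - s w> >= 0] with [w = A v] and the real
   [s = |w|^2 / (<w|A|w> + 1)] gives [- |w|^4 (<w|A|w> + 2) >= 0]. *)
Lemma psd_mulmx_eq0 v : ip v (A *m v) = 0 -> A *m v = 0.
Proof.
move=> vAv0; set w := A *m v; set z := ip w w; set c := ip w (A *m w).
have z_ge0 : 0 <= z by exact: ip_ge0.
have c_ge0 : 0 <= c by exact: psd_ip_ge0.
have c1_gt0 : 0 < c + 1 by rewrite ltr_wpDl.
set s := z / (c + 1).
have s_real : s^* = s by apply: geC0_conj; rewrite divr_ge0 // ltW.
have expand : ip (v - s *: w) (A *m (v - s *: w)) = - (s * z) - s * z + s * s * c.
  rewrite mulmxBr -scalemxAr -/w -!scaleNr ipDr !ipDl !ipZr !ipZl vAv0.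
  have -> : ip v (A *m w) = z by rewrite psd_ip_sym.
  by rewrite -/z -/c rmorphN /= s_real; ring.
have value : (c + 1) ^+ 2 * (- (s * z) - s * z + s * s * c) = - (z ^+ 2 * (c + 2)).
  by rewrite /s; field; rewrite lt0r_neq0.
have : 0 <= - (z ^+ 2 * (c + 2)).
  by rewrite -value -expand mulr_ge0 ?exprn_ge0 ?psd_ip_ge0 // ltW.
rewrite oppr_ge0 pmulr_lle0 ?ltr_wpDl // => z2_le0.
have : z ^+ 2 == 0 by rewrite eq_le z2_le0 exprn_ge0.
by rewrite expf_eq0 /= -/z ip_eq0 => /eqP.
Qed.

Lemma psd_expect_eq0 v : expect v A = 0 -> A *m v = 0.
Proof. by rewrite expectE; exact: psd_mulmx_eq0. Qed.

End PositiveSemidefinite.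

Section Kronecker.
Variable C : numClosedFieldType.

Lemma mxvec_index_eq p q (i i' : 'I_p) (j j' : 'I_q) :
  (mxvec_index i j == mxvec_index i' j') = (i == i') && (j == j').
Proof.
by rewrite /mxvec_index (inj_eq (@cast_ord_inj _ _ _)) (inj_eq enum_rank_inj).
Qed.

Lemma sum_mxvec_index p q (F : 'I_(p * q) -> C) :
  \sum_k F k = \sum_i \sum_j F (mxvec_index i j).
Proof.
rewrite (reindex (uncurry (@mxvec_index p q))) /=.
  by rewrite pair_big; apply: eq_bigr => -[].
by case: (@curry_mxvec_bij p q) => g h1 h2; exists g => x _; [apply: h1|apply: h2].
Qed.

Lemma kronE p1 q1 p2 q2 (A : 'M[C]_(p1, q1)) (B : 'M[C]_(p2, q2)) i1 i2 j1 j2 :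
  kron A B (mxvec_index i1 i2) (mxvec_index j1 j2) = A i1 j1 * B i2 j2.
Proof.
rewrite mxE (big_only1 i1) // => [|k /negPf k_i1 _]; last first.
  do 3 (rewrite big1 // => ? _).
  by rewrite mxvec_index_eq (eq_sym i1) k_i1 !mul0r.
rewrite (big_only1 i2) // => [|k /negPf k_i2 _]; last first.
  do 2 (rewrite big1 // => ? _).
  by rewrite mxvec_index_eq (eq_sym i2) k_i2 andbF !mul0r.
rewrite (big_only1 j1) // => [|k /negPf k_j1 _]; last first.
  rewrite big1 // => ? _.
  by rewrite (mxvec_index_eq j1) (eq_sym j1) k_j1 andbF !mul0r.
rewrite (big_only1 j2) // => [|k /negPf k_j2 _]; last first.
  by rewrite (mxvec_index_eq j1) (eq_sym j2) k_j2 !andbF !mul0r.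
by rewrite !eqxx mul1r.
Qed.

Lemma kron_colE p q (u : 'cV[C]_p) (v : 'cV[C]_q) i j :
  kron u v (mxvec_index i j) 0 = u i 0 * v j 0.
Proof.
have idx0 : 0 = mxvec_index (0 : 'I_1) (0 : 'I_1).
  by apply/val_inj; case: mxvec_index => -[].
by rewrite {1}idx0 kronE.
Qed.

Lemma expect_entries p (w : 'cV[C]_p) A :
  expect w A = \sum_i \sum_j (w i 0)^* * A i j * w j 0.
Proof.
rewrite /expect !mxE; under eq_bigr do rewrite !mxE mulr_suml.
by rewrite exchange_big; apply: eq_bigr => i _; apply: eq_bigr => j _; rewrite adjE.
Qed.

Lemma expect_kron p q (u : 'cV[C]_p) (v : 'cV[C]_q) X Y :
  expect (kron u v) (kron X Y) = expect u X * expect v Y.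
Proof.
rewrite !expect_entries sum_mxvec_index mulr_suml; apply: eq_bigr => i1 _.
rewrite mulr_suml.
transitivity (\sum_i2 \sum_j1 \sum_j2
   (u i1 0 * v i2 0)^* * (X i1 j1 * Y i2 j2) * (u j1 0 * v j2 0)).
  apply: eq_bigr => i2 _; rewrite sum_mxvec_index; apply: eq_bigr => j1 _.
  by apply: eq_bigr => j2 _; rewrite !kron_colE kronE.
rewrite exchange_big; apply: eq_bigr => j1 _ /=.
rewrite mulr_sumr; apply: eq_bigr => i2 _.
rewrite mulr_sumr; apply: eq_bigr => j2 _; rewrite rmorphM /=; ring.
Qed.

End Kronecker.

Section OneWayLOCC.
Variables (C : numClosedFieldType) (I : finType) (p q : nat).
Variables (a : I -> 'cV[C]_p) (b : I -> 'cV[C]_q).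

Lemma GA_eq_compl_GB_sym : GA_eq_compl_GB a b -> GA_eq_compl_GB b a.
Proof. by move=> hG u v uv; rewrite -[RHS]negbK hG // negbK. Qed.

Lemma oneway_LOCC_B_swap :
  oneway_LOCC_B (fun x => kron (a x) (b x)) ->
  oneway_LOCC_A (fun x => kron (b x) (a x)).
Proof.
case=> N [Q [R [Q_psd [Q_sum [R_psd [R_sum perfect]]]]]].
exists N, Q, R; do 4 split => //.
by move=> j k l kl; rewrite expect_kron mulrC -expect_kron perfect.
Qed.

Section TwoBases.
Hypothesis hG : GA_eq_compl_GB a b.
Variables (f g : 'I_p -> I).
Hypotheses (f_inj : injective f) (g_inj : injective g).
Hypotheses (f_orth : forall i i', i != i' -> ip (a (f i)) (a (f i')) = 0)
           (g_orth : forall i i', i != i' -> ip (a (g i)) (a (g i')) = 0).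
Hypotheses (f_neq0 : forall i, a (f i) != 0) (g_neq0 : forall i, a (g i) != 0).
Variables (i1 : 'I_p) (x2 : I).
Let x1 := f i1.
Hypotheses (x2_neq : x2 != x1) (b_x2 : b x2 = b x1).
Hypothesis b_f_overlap : forall i, ip (b (f i)) (b x1) != 0.
Hypothesis g_avoid : forall i, g i != x1 /\ g i != x2.

Section Outcome.
Variables (Q : 'M[C]_p) (R : I -> 'M[C]_q).
Hypotheses (Q_psd : psd Q) (R_psd : forall k, psd (R k)) (R_sum : \sum_k R k = 1%:M).
Hypothesis perfect : forall k l, k != l -> expect (a l) Q * expect (b l) (R k) = 0.

Lemma survivors_orthogonal l l' : l != l' ->
  expect (a l) Q != 0 -> expect (a l') Q != 0 -> ip (b l) (b l') = 0.
Proof.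
move=> ll' l_surv l'_surv.
have Bob_l k : k != l -> R k *m b l = 0.
  move=> kl; apply: psd_expect_eq0 => //; apply/eqP.
  by have /eqP := perfect kl; rewrite mulf_eq0 (negPf l_surv).
have Rl_bl : R l *m b l = b l.
  rewrite -{2}(mul1mx (b l)) -R_sum mulmx_suml (bigD1 l) //= big1 ?addr0 //.
have Rl_bl' : R l *m b l' = 0.
  apply: psd_expect_eq0 => //; apply/eqP.
  by have /eqP := perfect ll'; rewrite mulf_eq0 (negPf l'_surv).
by rewrite -Rl_bl -psd_ip_sym // Rl_bl' ip0r.
Qed.

Lemma survivor_kills_column : expect (a x1) Q != 0 ->
  forall i, i != i1 -> Q *m a (f i) = 0.
Proof.
move=> x1_surv i ii1; apply: psd_expect_eq0 => //; apply/eqP/contraT => fi_surv.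
have fi_x1 : f i != x1 by rewrite (inj_eq f_inj).
by have := b_f_overlap i; rewrite (survivors_orthogonal fi_x1) ?eqxx.
Qed.

Lemma survivor_overlap z : expect (a x1) Q != 0 ->
  ip (a x1) (a z) != 0 -> expect (a z) Q != 0.
Proof.
move=> x1_surv x1z; apply/contraT; rewrite negbK => /eqP/psd_expect_eq0 Qz.
have Qx1 : Q *m a x1 != 0.
  by apply: contra x1_surv; rewrite expectE => /eqP->; rewrite ip0r.
have := Qz Q_psd; rewrite (orthogonal_basis_expansion f_neq0 f_orth (a z)).
rewrite mulmx_sumr (bigD1 i1) //= big1 => [|i ii1]; last first.
  by rewrite -scalemxAr survivor_kills_column // scaler0.
rewrite addr0 -scalemxAr => /eqP; rewrite scaler_eq0 (negPf Qx1) orbF.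
by rewrite mulf_eq0 invr_eq0 ip_eq0 (negPf (f_neq0 _)) (negPf x1z).
Qed.

Lemma survivor_impossible : expect (a x1) Q = 0.
Proof.
apply/eqP/contraT => x1_surv.
have a_x1x2 : ip (a x1) (a x2) = 0.
  apply/eqP; have := hG x2_neq; rewrite b_x2 ip_eq0C => /(congr1 negb).
  by rewrite negbK (negPf (b_f_overlap i1)).
pose d i := ip (a (g i)) (a x1) / ip (a (g i)) (a (g i)).
have d_neq0 i : (d i != 0) = (ip (a (g i)) (a x1) != 0).
  by rewrite mulf_eq0 invr_eq0 ip_eq0 (negPf (g_neq0 i)) orbF.
have g_surv i : d i != 0 -> expect (a (g i)) Q != 0.
  by rewrite d_neq0 => gx1; apply: survivor_overlap; rewrite // ip_eq0C.
have single i i' : i != i' -> d i != 0 -> d i' = 0.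
  move=> ii' di; apply/eqP/contraT => di'.
  have gii' : g i != g i' by rewrite (inj_eq g_inj).
  have := hG gii'; rewrite g_orth // eqxx.
  by rewrite (survivors_orthogonal gii') ?g_surv ?eqxx.
have x1E : a x1 = \sum_i d i *: a (g i).
  exact: orthogonal_basis_expansion g_neq0 g_orth (a x1).
have [i0 di0] : exists i0, d i0 != 0.
  apply/existsP/contraT; rewrite negb_exists => /forallP d0.
  have := f_neq0 i1; rewrite x1E big1 ?eqxx // => i _.
  by have := d0 i; rewrite negbK => /eqP->; rewrite scale0r.
have x1_par : a x1 = d i0 *: a (g i0).
  rewrite x1E (bigD1 i0) //= big1 ?addr0 // => i ii0.
  by rewrite (single i0) ?scale0r // eq_sym.
have [gx1 gx2] := g_avoid i0.
have a_g0x2 : ip (a (g i0)) (a x2) = 0.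
  apply/eqP; move: a_x1x2; rewrite x1_par ipZl => /eqP.
  by rewrite mulf_eq0 conjC_eq0 (negPf di0).
have := hG gx2; rewrite a_g0x2 eqxx b_x2 /=.
by rewrite -(hG gx1) -d_neq0 di0.
Qed.

End Outcome.

Theorem not_oneway_LOCC_A_of_two_bases :
  ~ oneway_LOCC_A (fun x => kron (a x) (b x)).
Proof.
case=> N [Q [R [Q_psd [Q_sum [R_psd [R_sum perfect]]]]]].
have : ip (a x1) (a x1) == 0.
  rewrite -expect1 -Q_sum expect_sum big1 // => j _.
  apply: (survivor_impossible (R := R j)) => // k l kl.
  by rewrite -expect_kron perfect.
by rewrite ip_eq0 (negPf (f_neq0 i1)).
Qed.

End TwoBases.
End OneWayLOCC.

Definition domino_tuple (d : domino) := let: Dom h l b s := d in (h, l, b, s).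
Definition tuple_domino (t : bool * nat * nat * nat) :=
  let: (h, l, b, s) := t in Dom h l b s.
Lemma domino_tupleK : cancel domino_tuple tuple_domino. Proof. by case. Qed.
HB.instance Definition _ := Equality.copy domino (can_type domino_tupleK).

Lemma modn_addS_inj M st s k k' : (k < s)%N -> (k' < s)%N -> (s <= M)%N ->
  ((st + k.+1) %% M == (st + k'.+1) %% M)%N = (k == k').
Proof.
move=> ks k's sM; rewrite -!addSnnS eqn_modDl !modn_small //.
  exact: leq_trans k's sM.
exact: leq_trans ks sM.
Qed.

Lemma exists_neq_ord n : (1 < n)%N -> forall i : 'I_n, exists j : 'I_n, j != i.
Proof.
move=> n_gt1 i; have j_lt : ((val i == 0%N) < n)%N by case: eqP => // _; exact: ltnW.
by exists (Ordinal j_lt); apply/eqP => /(congr1 val) /=; case: (val i).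
Qed.

Section Diagram.
Variables (m n : nat) (D : seq domino).
Hypothesis hD : domino_diagram m n D.

Lemma domino_ofP (x : 'I_m * 'I_n) :
  dom_mem (domino_of D x) x /\ domino_of D x \in D.
Proof.
case: hD => _ /(_ x) count1.
have hasx : has (fun d => dom_mem d x) D by rewrite has_count count1.
by split; [exact: (nth_find _ hasx) | apply: mem_nth; rewrite -has_find].
Qed.

Lemma domino_of_eq (x : 'I_m * 'I_n) d :
  d \in D -> dom_mem d x -> domino_of D x = d.
Proof.
move=> dD dx; have [dx' dD'] := domino_ofP x.
case: hD => _ /(_ x); rewrite -size_filter.
have : d \in filter (fun d => dom_mem d x) D by rewrite mem_filter dx dD.
have : domino_of D x \in filter (fun d => dom_mem d x) D.
  by rewrite mem_filter dx' dD'.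
by case: filter => [|y [|]] //= /[!inE] /eqP-> /eqP->.
Qed.

Lemma domino_of_valid (x : 'I_m * 'I_n) : valid_domino m n (domino_of D x).
Proof. by case: hD => /allP vD _; apply: vD; case: (domino_ofP x). Qed.

End Diagram.

Section Kets.
Variable C : numClosedFieldType.

Lemma ketE p (j i : 'I_p) : ket C j i 0 = (i == j)%:R.
Proof. by rewrite mxE. Qed.

Lemma ip_ketr p (u : 'cV[C]_p) j : ip u (ket C j) = (u j 0)^*.
Proof.
rewrite ipE (bigD1 j) //= big1 ?addr0 => [|i /negPf ij].
  by rewrite ketE eqxx mulr1.
by rewrite ketE ij mulr0.
Qed.

Lemma ip_ket p (j : 'I_p) : ip (ket C j) (ket C j) = 1.
Proof. by rewrite ip_ketr ketE eqxx rmorph1. Qed.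

Lemma omega_neq0 s : (0 < s)%N -> omega C s != 0.
Proof. by move=> s_gt0; rewrite expf_eq0 rootC_eq0 // oppr_eq0 oner_eq0 andbF. Qed.

End Kets.

Section States.
Variables (C : numClosedFieldType) (m n : nat) (D : seq domino).
Hypothesis hD : domino_diagram m n D.
Variables (alpha : 'I_m -> C) (beta : 'I_n -> C).
Hypotheses (alpha_neq0 : forall r, alpha r != 0) (beta_neq0 : forall c, beta c != 0).
Local Notation stA := (stateA alpha beta D).
Local Notation stB := (stateB alpha beta D).

Lemma stateA_horiz x : dhoriz (domino_of D x) -> stA x = ket C x.1.
Proof. by rewrite /stateA => ->. Qed.

Lemma stateB_vert x : ~~ dhoriz (domino_of D x) -> stB x = ket C x.2.
Proof. by rewrite /stateB => /negPf->. Qed.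

Lemma stateA_vertE x i : ~~ dhoriz (domino_of D x) -> stA x i 0 =
  let d := domino_of D x in
  \sum_(k < dlen d | ((dstart d + k.+1) %% m)%N == i)
     beta x.2 ^+ k.+1 * omega C (dlen d) ^+ (pos_in d x * k.+1).
Proof. by rewrite /stateA => /negPf->; rewrite mxE. Qed.

Lemma stateB_horizE x j : dhoriz (domino_of D x) -> stB x j 0 =
  let d := domino_of D x in
  \sum_(k < dlen d | ((dstart d + k.+1) %% n)%N == j)
     alpha x.1 ^+ k.+1 * omega C (dlen d) ^+ (pos_in d x * k.+1).
Proof. by rewrite /stateB => ->; rewrite mxE. Qed.

Lemma stateA_support (r i : 'I_m) (c : 'I_n) : stA (r, c) i 0 != 0 ->
  domino_of D (i, c) = domino_of D (r, c).
Proof.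
set d := domino_of D (r, c).
have [dh|dv] := boolP (dhoriz d).
  by rewrite stateA_horiz // ketE /=; case: (eqVneq i r) => [->|_]; rewrite ?eqxx.
rewrite stateA_vertE //=; have [dx dD] := domino_ofP hD (r, c).
have [k k_hit|none] := pickP (fun k : 'I_(dlen d) => (dstart d + k.+1) %% m == i)%N.
  move=> _; apply: (domino_of_eq hD dD); move: dx; rewrite /dom_mem -/d (negPf dv) /=.
  by case/andP=> -> _; apply/hasP; exists (val k); rewrite // mem_iota ltn_ord.
by rewrite big_pred0 ?eqxx.
Qed.

Lemma stateB_support (r : 'I_m) (c j : 'I_n) : stB (r, c) j 0 != 0 ->
  domino_of D (r, j) = domino_of D (r, c).
Proof.
set d := domino_of D (r, c).
have [dh|dv] := boolP (dhoriz d); last first.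
  by rewrite stateB_vert // ketE /=; case: (eqVneq j c) => [->|_]; rewrite ?eqxx.
rewrite stateB_horizE //=; have [dx dD] := domino_ofP hD (r, c).
have [k k_hit|none] := pickP (fun k : 'I_(dlen d) => (dstart d + k.+1) %% n == j)%N.
  move=> _; apply: (domino_of_eq hD dD); move: dx; rewrite /dom_mem -/d dh /=.
  by case/andP=> -> _; apply/hasP; exists (val k); rewrite // mem_iota ltn_ord.
by rewrite big_pred0 ?eqxx.
Qed.

Lemma stateA_diag_neq0 x : stA x x.1 0 != 0.
Proof.
set d := domino_of D x.
have [dh|dv] := boolP (dhoriz d); first by rewrite stateA_horiz // ketE eqxx oner_eq0.
rewrite stateA_vertE //=; have [dx _] := domino_ofP hD x.
have := domino_of_valid hD x; rewrite /valid_domino -/d (negPf dv).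
case/and4P=> _ _ s_gt0 s_le.
move: dx; rewrite /dom_mem -/d (negPf dv) => /andP[_ /hasP[k]].
rewrite mem_iota add0n => /= ks k_hit.
rewrite (big_pred1 (Ordinal ks)) => [|k' /=]; last first.
  by rewrite -(eqP k_hit) (modn_addS_inj _ _ _ s_le).
by rewrite mulf_neq0 // expf_neq0 // omega_neq0.
Qed.

Lemma stateB_diag_neq0 x : stB x x.2 0 != 0.
Proof.
set d := domino_of D x.
have [dh|dv] := boolP (dhoriz d); last by rewrite stateB_vert // ketE eqxx oner_eq0.
rewrite stateB_horizE //=; have [dx _] := domino_ofP hD x.
have := domino_of_valid hD x; rewrite /valid_domino -/d dh.
case/and4P=> _ _ s_gt0 s_le.
move: dx; rewrite /dom_mem -/d dh => /andP[_ /hasP[k]].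
rewrite mem_iota add0n => /= ks k_hit.
rewrite (big_pred1 (Ordinal ks)) => [|k' /=]; last first.
  by rewrite -(eqP k_hit) (modn_addS_inj _ _ _ s_le).
by rewrite mulf_neq0 // expf_neq0 // omega_neq0.
Qed.

Lemma stateA_neq0 x : stA x != 0.
Proof. by apply: contraNneq (stateA_diag_neq0 x) => ->; rewrite mxE. Qed.

Lemma stateB_neq0 x : stB x != 0.
Proof. by apply: contraNneq (stateB_diag_neq0 x) => ->; rewrite mxE. Qed.

Hypothesis hG : GA_eq_compl_GB stA stB.

(* Within one vertical domino Bob's vectors coincide, so G_A = complement of
   G_B forces orthogonality; otherwise the supports are disjoint. *)
Lemma stateA_column_orthogonal (r r' : 'I_m) (c : 'I_n) : r != r' ->
  ip (stA (r, c)) (stA (r', c)) = 0.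
Proof.
move=> rr'; set d := domino_of D (r, c); set d' := domino_of D (r', c).
have cells : (r, c) != (r', c) by rewrite xpair_eqE eqxx andbT.
have [/andP[/eqP dd' dv]|] := boolP ((d == d') && ~~ dhoriz d).
  have dv' : ~~ dhoriz d' by rewrite -dd'.
  have := hG cells; rewrite !stateB_vert // ip_ket oner_eq0 /=.
  by move/negbFE/eqP.
move=> not_vert; rewrite ipE big1 // => i _; apply/eqP; rewrite mulf_eq0 conjC_eq0.
apply/contraT; rewrite negb_or => /andP[ri r'i].
have dd' : d = d' by rewrite /d /d' -(stateA_support ri) -(stateA_support r'i).
have dh : dhoriz d by move: not_vert; rewrite dd' eqxx /= negbK.
have dh' : dhoriz d' by rewrite -dd'.
move: ri r'i; rewrite !stateA_horiz // !ketE /=.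
by case: (eqVneq i r) => [->|]; rewrite ?(negPf rr') eqxx.
Qed.

Lemma stateB_row_orthogonal (r : 'I_m) (c c' : 'I_n) : c != c' ->
  ip (stB (r, c)) (stB (r, c')) = 0.
Proof.
move=> cc'; set d := domino_of D (r, c); set d' := domino_of D (r, c').
have cells : (r, c) != (r, c') by rewrite xpair_eqE eqxx.
have [/andP[/eqP dd' dh]|] := boolP ((d == d') && dhoriz d).
  have dh' : dhoriz d' by rewrite -dd'.
  have := hG cells; rewrite !stateA_horiz // ip_ket oner_eq0 /=.
  by move/esym/eqP.
move=> not_horiz; rewrite ipE big1 // => j _; apply/eqP; rewrite mulf_eq0 conjC_eq0.
apply/contraT; rewrite negb_or => /andP[cj c'j].
have dd' : d = d' by rewrite /d /d' -(stateB_support cj) -(stateB_support c'j).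
have dv : ~~ dhoriz d by move: not_horiz; rewrite dd' eqxx.
have dv' : ~~ dhoriz d' by rewrite -dd'.
move: cj c'j; rewrite !stateB_vert // !ketE /=.
by case: (eqVneq j c) => [->|]; rewrite ?(negPf cc') eqxx.
Qed.

End States.

Section LongDominoes.
Variables (C : numClosedFieldType) (m n : nat) (D : seq domino).
Hypothesis hD : domino_diagram m n D.
Variables (alpha : 'I_m -> C) (beta : 'I_n -> C).
Hypotheses (alpha_neq0 : forall r, alpha r != 0) (beta_neq0 : forall c, beta c != 0).
Hypothesis hG : GA_eq_compl_GB (stateA alpha beta D) (stateB alpha beta D).
Local Notation stA := (stateA alpha beta D).
Local Notation stB := (stateB alpha beta D).

Lemma long_vertical_domino_cells d : d \in D -> ~~ dhoriz d -> (2 <= dlen d)%N ->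
  exists (c : 'I_n) (r1 r2 : 'I_m),
    [/\ r1 != r2, stB (r1, c) = ket C c & stB (r2, c) = ket C c].
Proof.
move=> dD dv d2; have := allP (proj1 hD) d dD.
rewrite /valid_domino (negPf dv) => /and4P[cn bm _ sm].
have m_gt0 : (0 < m)%N by apply: leq_ltn_trans bm.
pose cell k := Ordinal (ltn_pmod (dstart d + k.+1) m_gt0).
have cellP k : (k < dlen d)%N -> stB (cell k, Ordinal cn) = ket C (Ordinal cn).
  move=> ks; apply: stateB_vert; rewrite (domino_of_eq hD dD) //.
  by rewrite /dom_mem (negPf dv) /= eqxx; apply/hasP; exists k; rewrite ?mem_iota.
exists (Ordinal cn), (cell 0%N), (cell 1%N); split; rewrite ?cellP //; last exact: ltnW.
by apply/eqP => /(congr1 val) /= /eqP; rewrite (modn_addS_inj _ _ _ (leq_trans d2 sm)).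
Qed.

Lemma long_horizontal_domino_cells d : d \in D -> dhoriz d -> (2 <= dlen d)%N ->
  exists (r : 'I_m) (c1 c2 : 'I_n),
    [/\ c1 != c2, stA (r, c1) = ket C r & stA (r, c2) = ket C r].
Proof.
move=> dD dh d2; have := allP (proj1 hD) d dD.
rewrite /valid_domino dh => /and4P[rm bn _ sn].
have n_gt0 : (0 < n)%N by apply: leq_ltn_trans bn.
pose cell k := Ordinal (ltn_pmod (dstart d + k.+1) n_gt0).
have cellP k : (k < dlen d)%N -> stA (Ordinal rm, cell k) = ket C (Ordinal rm).
  move=> ks; apply: stateA_horiz; rewrite (domino_of_eq hD dD) //.
  by rewrite /dom_mem dh /= eqxx; apply/hasP; exists k; rewrite ?mem_iota.
exists (Ordinal rm), (cell 0%N), (cell 1%N); split; rewrite ?cellP //; last exact: ltnW.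
by apply/eqP => /(congr1 val) /= /eqP; rewrite (modn_addS_inj _ _ _ (leq_trans d2 sn)).
Qed.

Lemma vertical_domino_not_oneway_LOCC_A : (1 < n)%N ->
  has (fun d => ~~ dhoriz d && (2 <= dlen d)%N) D ->
  ~ oneway_LOCC_A (state alpha beta D).
Proof.
move=> n_gt1 /hasP[d dD /andP[dv d2]].
have [c [r1 [r2 [r12 b1 b2]]]] := long_vertical_domino_cells dD dv d2.
have [c' c'c] := exists_neq_ord n_gt1 c.
apply: (@not_oneway_LOCC_A_of_two_bases _ _ _ _ _ _ hG
  (fun r => (r, c)) (fun r => (r, c')) _ _ _ _ _ _ r1 (r2, c)).
- by move=> r r' [].
- by move=> r r' [].
- by move=> r r'; apply: stateA_column_orthogonal.
- by move=> r r'; apply: stateA_column_orthogonal.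
- by move=> r; apply: stateA_neq0.
- by move=> r; apply: stateA_neq0.
- by rewrite xpair_eqE eqxx andbT eq_sym.
- by rewrite b1 b2.
- move=> r; rewrite b1 ip_ketr conjC_eq0.
  exact: (stateB_diag_neq0 hD beta alpha_neq0 (r, c)).
- by move=> r; rewrite !xpair_eqE (negPf c'c) !andbF.
Qed.

Lemma horizontal_domino_not_oneway_LOCC_B : (1 < m)%N ->
  has (fun d => dhoriz d && (2 <= dlen d)%N) D ->
  ~ oneway_LOCC_B (state alpha beta D).
Proof.
move=> m_gt1 /hasP[d dD /andP[dh d2]] /oneway_LOCC_B_swap.
have [r [c1 [c2 [c12 a1 a2]]]] := long_horizontal_domino_cells dD dh d2.
have [r' r'r] := exists_neq_ord m_gt1 r.
apply: (@not_oneway_LOCC_A_of_two_bases _ _ _ _ _ _ (GA_eq_compl_GB_sym hG)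
  (fun c => (r, c)) (fun c => (r', c)) _ _ _ _ _ _ c1 (r, c2)).
- by move=> c c' [].
- by move=> c c' [].
- by move=> c c'; apply: stateB_row_orthogonal.
- by move=> c c'; apply: stateB_row_orthogonal.
- by move=> c; apply: stateB_neq0.
- by move=> c; apply: stateB_neq0.
- by rewrite xpair_eqE eqxx eq_sym.
- by rewrite a1 a2.
- move=> c; rewrite a1 ip_ketr conjC_eq0.
  exact: (stateA_diag_neq0 hD alpha beta_neq0 (r, c)).
- by move=> c; rewrite !xpair_eqE (negPf r'r).
Qed.

End LongDominoes.

Theorem mainTheorem8 (C : numClosedFieldType) (m n : nat)
  (hm : (2 <= m)%N) (hn : (2 <= n)%N) (D : seq domino)
  (hD : domino_diagram m n D)
  (alpha : 'I_m -> C) (beta : 'I_n -> C)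
  (halpha : forall r, alpha r != 0) (hbeta : forall c, beta c != 0)
  (hG : GA_eq_compl_GB (stateA alpha beta D) (stateB alpha beta D)) :
  ((has (fun d => ~~ dhoriz d && (2 <= dlen d)%N) D) ->
     ~ oneway_LOCC_A (state alpha beta D)) /\
  ((has (fun d => dhoriz d && (2 <= dlen d)%N) D) ->
     ~ oneway_LOCC_B (state alpha beta D)).
Proof.
split.
  exact: (vertical_domino_not_oneway_LOCC_A hD halpha hbeta hG hn).
exact: (horizontal_domino_not_oneway_LOCC_B hD halpha hbeta hG hm).
Qed.
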